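(* For every $x\in\mathcal X$, as $\mu\ge0$ increases: (1) $\hat p_{C^\mu(x)}(x)$ is non-decreasing; (2) $w(C^\mu(x))\hat p_{C^\mu(x)}(x)$ is non-increasing; (3) $D^\mu(x)$ is non-increasing; (4) $w(C^\mu(x))\hat p_{C^\mu(x)}(x)D^\mu(x)$ is non-increasing; (5) $(1-\hat p_{C^\mu(x)}(x)-\alpha)D^\mu(x)$ is non-increasing.
   Context: Let $\alpha\in(0,1)$. $\mathcal I$ is a finite collection of subsets of $\mathcal Y$ enumerated in a fixed lexicographic order, and $w:\mathcal I\to(0,B)$ a bounded positive weight. For $x\in\mathcal X$, $C\in\mathcal I$, $\hat p_C(x)\in[0,1]$ is a fixed estimate of $\mathbb P(Y\in C\mid X=x)$. For $\mu\ge0$ let $\hat\ell_{x,C}(\mu)=w(C)\hat p_C(x)+\mu(\hat p_C(x)-(1-\alpha))$. $C^\mu(x)$ is a maximizer of $\hat\ell_{x,C}(\mu)$ over $C\in\mathcal I$, ties broken in favor of the smallest weight $w(C)$ and then the smallest index; $D^\mu(x)=\mathbb 1\{\max_{C\in\mathcal I}\hat\ell_{x,C}(\mu)>0\}$. *)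

From mathcomp Require Import all_boot all_order all_algebra.
Set Implicit Arguments. Unset Strict Implicit. Unset Printing Implicit Defensive.
Import Order.TTheory GRing.Theory Num.Theory.
Local Open Scope ring_scope.

Section Defs.
Variables (R : realFieldType) (X : Type) (n : nat).
(* The collection I is enumerated (in its fixed lexicographic order) as 'I_n.+1;
   index order = enumeration order. *)
Variables (alpha : R) (w : 'I_n.+1 -> R) (phat : X -> 'I_n.+1 -> R).

Definition ell (x : X) (C : 'I_n.+1) (mu : R) : R :=
  w C * phat x C + mu * (phat x C - (1 - alpha)).

Definition selected (mu : R) (x : X) (C : 'I_n.+1) : bool :=
  [forall C' : 'I_n.+1,
     (ell x C' mu < ell x C mu) ||
     ((ell x C' mu == ell x C mu) &&
      ((w C < w C') || ((w C == w C') && (C <= C')%N)))].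

(* C^mu(x) : the (unique) selected set; default ord0 never used. *)
Definition Cmu (mu : R) (x : X) : 'I_n.+1 :=
  odflt ord0 [pick C | selected mu x C].

Definition maxell (mu : R) (x : X) : R :=
  \big[Num.max/ell x ord0 mu]_(C < n.+1) ell x C mu.

Definition Dmu (mu : R) (x : X) : R := if 0 < maxell mu x then 1 else 0.
End Defs.

From mathcomp Require Import all_boot all_order all_algebra.
From mathcomp Require Import lra.
Set Implicit Arguments. Unset Strict Implicit. Unset Printing Implicit Defensive.
Import Order.TTheory GRing.Theory Num.Theory.
Local Open Scope ring_scope.

(* Each [ell x C] is affine in [mu], with intercept [w C * phat x C >= 0] and
   slope [phat x C - (1 - alpha)].  Comparing the maximizers at [mu1 < mu2]
   with each other at both points forces the slope of the maximizer (hence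
   [phat]) to increase and, since [mu1 >= 0], its intercept [w * phat] to
   decrease.  The maximum stays positive as [mu] decreases because a positive
   slope forces a positive intercept; and when the maximum changes sign between
   [mu1] and [mu2], the maximizer at [mu1] must have negative slope, i.e.
   [1 - phat - alpha > 0]. *)

Lemma finType_total_min (T : finType) (r : rel T) :
  T -> transitive r -> total r -> exists c, forall x, r c x.
Proof.
move=> x0 r_trans r_total.
have mem_sorted x : x \in sort r (enum T) by rewrite mem_sort mem_enum.
case def_s: (sort r (enum T)) (sort_sorted r_total (enum T)) => [|c s] sorted_s.
  by have := mem_sorted x0; rewrite def_s.
exists c => x; have := mem_sorted x; rewrite def_s inE => /predU1P[-> | xs].
  by have := r_total c c; rewrite orbb.
exact: (allP (order_path_min r_trans sorted_s)).
Qed.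

Section Lexicographic.
Variables (d : Order.disp_t) (K : orderType d) (T : Type) (k : T -> K).

Definition lexrel (r : rel T) : rel T :=
  fun a b => (k a < k b)%O || ((k a == k b) && r a b).

Lemma lexrel_trans r : transitive r -> transitive (lexrel r).
Proof.
move=> r_trans b a c /orP[ab | /andP[/eqP ab rab]] /orP[bc | /andP[/eqP bc rbc]].
- by rewrite /lexrel (lt_trans ab bc).
- by rewrite /lexrel -bc ab.
- by rewrite /lexrel ab bc.
- by rewrite /lexrel ab bc eqxx (r_trans _ _ _ rab rbc) orbT.
Qed.

Lemma lexrel_total r : total r -> total (lexrel r).
Proof.
move=> r_total a b; rewrite /lexrel.
by case: (ltgtP (k a) (k b)) => //= ->; rewrite eqxx.
Qed.

End Lexicographic.

Section AffineMaximizers.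
Variable R : realFieldType.
Implicit Types a b mu : R.

Lemma argmax_slope_le a1 b1 a2 b2 mu1 mu2 : mu1 < mu2 ->
  a2 + mu1 * b2 <= a1 + mu1 * b1 -> a1 + mu2 * b1 <= a2 + mu2 * b2 ->
  b1 <= b2.
Proof.
move=> lt_mu max1 max2.
have : 0 <= (mu2 - mu1) * (b2 - b1) by nra.
by rewrite pmulr_rge0 ?subr_gt0 // subr_ge0.
Qed.

Lemma argmax_intercept_ge a1 b1 a2 b2 mu : 0 <= mu -> b1 <= b2 ->
  a2 + mu * b2 <= a1 + mu * b1 -> a2 <= a1.
Proof. by move=> mu_ge0 le_b max1; nra. Qed.

Lemma affine_gt0_antitone a b mu1 mu2 : 0 <= mu1 <= mu2 ->
  (0 < b -> 0 < a) -> 0 < a + mu2 * b -> 0 < a + mu1 * b.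
Proof.
move=> /andP[mu1_ge0 le_mu] a_gt0 pos2.
have [b_gt0 | b_le0] := ltP 0 b; last by nra.
by have := a_gt0 b_gt0; nra.
Qed.

Lemma affine_sign_change_slope_lt0 a b mu1 mu2 : mu1 <= mu2 ->
  a + mu2 * b <= 0 -> 0 < a + mu1 * b -> b < 0.
Proof. by move=> le_mu neg2 pos1; rewrite ltNge; apply/negP => b_ge0; nra. Qed.

End AffineMaximizers.

Section Monotonicity.
Variables (R : realFieldType) (X : Type) (n : nat).
Variables (alpha : R) (w : 'I_n.+1 -> R) (phat : X -> 'I_n.+1 -> R).
Hypothesis alpha_le1 : alpha <= 1.
Hypothesis w_gt0 : forall C, 0 < w C.

Local Notation ell := (ell alpha w phat).
Local Notation selected := (selected alpha w phat).
Local Notation Cmu := (Cmu alpha w phat).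
Local Notation maxell := (maxell alpha w phat).
Local Notation Dmu := (Dmu alpha w phat).

(* Larger [ell] first (hence the dual order), then smaller weight, then smaller
   index. *)
Definition prefer (mu : R) (x : X) : rel 'I_n.+1 :=
  lexrel (fun C => ell x C mu : R^d) (lexrel w (fun C C' => C <= C')%N).

Lemma selectedE mu x C : selected mu x C = [forall C', prefer mu x C C'].
Proof. by apply: eq_forallb => C'; rewrite /prefer /lexrel ltEdual eq_sym. Qed.

Lemma Cmu_selected mu x : selected mu x (Cmu mu x).
Proof.
rewrite /Cmu; case: pickP => [C // | none].
have prefer_trans : transitive (prefer mu x).
  by apply/lexrel_trans/lexrel_trans => ? ? ?; apply: leq_trans.
have prefer_total : total (prefer mu x).
  by apply/lexrel_total/lexrel_total => ? ?; apply: leq_total.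
have [c c_min] := finType_total_min ord0 prefer_trans prefer_total.
by have := none c; rewrite selectedE; move/forallP: c_min => ->.
Qed.

Lemma ell_le_Cmu mu x C : ell x C mu <= ell x (Cmu mu x) mu.
Proof.
have /forallP/(_ C)/orP[/ltW // | /andP[/eqP -> _]] := Cmu_selected mu x.
exact: lexx.
Qed.

Lemma maxell_Cmu mu x : maxell mu x = ell x (Cmu mu x) mu.
Proof.
apply/le_anti; rewrite le_bigmax andbT.
by apply: bigmax_le => [|C _]; apply: ell_le_Cmu.
Qed.

Lemma Dmu_Cmu mu x : Dmu mu x = if 0 < ell x (Cmu mu x) mu then 1 else 0.
Proof. by rewrite /Dmu maxell_Cmu. Qed.

Lemma phat_Cmu_le x (mu1 mu2 : R) : mu1 <= mu2 ->
  phat x (Cmu mu1 x) <= phat x (Cmu mu2 x).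
Proof.
rewrite le_eqVlt => /predU1P[-> // | lt_mu].
suff : phat x (Cmu mu1 x) - (1 - alpha) <= phat x (Cmu mu2 x) - (1 - alpha).
  by rewrite lerD2r.
exact: argmax_slope_le lt_mu (ell_le_Cmu _ _ _) (ell_le_Cmu _ _ _).
Qed.

Lemma wphat_Cmu_ge x (mu1 mu2 : R) : 0 <= mu1 -> mu1 <= mu2 ->
  w (Cmu mu2 x) * phat x (Cmu mu2 x) <= w (Cmu mu1 x) * phat x (Cmu mu1 x).
Proof.
move=> mu1_ge0 le_mu; apply: argmax_intercept_ge mu1_ge0 _ (ell_le_Cmu _ _ _).
by rewrite lerD2r phat_Cmu_le.
Qed.

Lemma Dmu_ge0 mu x : 0 <= Dmu mu x.
Proof. by rewrite /Dmu; case: ifP. Qed.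

Lemma Dmu_le x (mu1 mu2 : R) : 0 <= mu1 -> mu1 <= mu2 -> Dmu mu2 x <= Dmu mu1 x.
Proof.
move=> mu1_ge0 le_mu; rewrite !Dmu_Cmu; case: ifP => [pos2 | _]; last by case: ifP.
suff -> : 0 < ell x (Cmu mu1 x) mu1 by [].
apply: lt_le_trans (ell_le_Cmu _ _ (Cmu mu2 x)).
apply: affine_gt0_antitone pos2; first by rewrite mu1_ge0.
rewrite subr_gt0 => slope_gt0; apply: mulr_gt0; first exact: w_gt0.
by apply: le_lt_trans slope_gt0; rewrite subr_ge0.
Qed.

Lemma coverage_gap_le x (mu1 mu2 : R) : 0 <= mu1 -> mu1 <= mu2 ->
  (1 - phat x (Cmu mu2 x) - alpha) * Dmu mu2 x
    <= (1 - phat x (Cmu mu1 x) - alpha) * Dmu mu1 x.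
Proof.
move=> mu1_ge0 le_mu; have := Dmu_le x mu1_ge0 le_mu; rewrite !Dmu_Cmu.
case: ifP => pos2; case: ifP => pos1; rewrite ?mulr1 ?mulr0 ?lexx //.
- by have := phat_Cmu_le x le_mu; lra.
- by rewrite ler10.
move=> _; suff : phat x (Cmu mu1 x) - (1 - alpha) < 0 by lra.
apply: affine_sign_change_slope_lt0 le_mu _ pos1.
by apply: le_trans (ell_le_Cmu _ _ (Cmu mu1 x)) _; rewrite leNgt pos2.
Qed.

End Monotonicity.

Theorem proposition9 (R : realFieldType) (X : Type) (n : nat) (alpha B : R)
  (w : 'I_n.+1 -> R) (phat : X -> 'I_n.+1 -> R)
  (halpha : 0 < alpha < 1)
  (hw : forall C, 0 < w C < B)
  (hp : forall x C, 0 <= phat x C <= 1) :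
  forall (x : X) (mu1 mu2 : R), 0 <= mu1 -> mu1 <= mu2 ->
    let C1 := Cmu alpha w phat mu1 x in
    let C2 := Cmu alpha w phat mu2 x in
    let D1 := Dmu alpha w phat mu1 x in
    let D2 := Dmu alpha w phat mu2 x in
    [/\ phat x C1 <= phat x C2,
        w C2 * phat x C2 <= w C1 * phat x C1,
        D2 <= D1,
        w C2 * phat x C2 * D2 <= w C1 * phat x C1 * D1
      & (1 - phat x C2 - alpha) * D2 <= (1 - phat x C1 - alpha) * D1].
Proof.
move=> x mu1 mu2 mu1_ge0 le_mu C1 C2 D1 D2.
have alpha_le1 : alpha <= 1 by case/andP: halpha => _ /ltW.
have w_gt0 C : 0 < w C by case/andP: (hw C).
have le_D := Dmu_le phat alpha_le1 w_gt0 x mu1_ge0 le_mu.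
have wphat_ge0 : 0 <= w C2 * phat x C2.
  by apply: mulr_ge0; [exact: ltW | case/andP: (hp x C2)].
split.
- exact: phat_Cmu_le.
- exact: wphat_Cmu_ge.
- exact: le_D.
- exact: ler_pM wphat_ge0 (Dmu_ge0 _ _ _ _ _) (wphat_Cmu_ge _ _ _ _ mu1_ge0 le_mu) le_D.
- exact: coverage_gap_le.
Qed.
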